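(* Let $X$ be a compact metric space and $f\colon X\to X$ continuous. If $(X,f)$ has the shadowing property, then it has $\gamma$-restricted two-sided cofinal orbital shadowing.
   Context: Shadowing: for every $\epsilon>0$ there is $\delta>0$ such that for every sequence $\langle x_i\rangle_{i\ge0}$ with $d(f(x_i),x_{i+1})<\delta$ for all $i$ there is $z\in X$ with $d(f^i(z),x_i)<\epsilon$ for all $i\ge0$. $d_H$ is the Hausdorff metric. A full trajectory is $\langle z_i\rangle_{i\in\mathbb Z}$ with $f(z_i)=z_{i+1}$. For two-sided sequences, $\omega(\langle x_i\rangle)=\bigcap_{M}\overline{\{x_n:n>M\}}$, $\alpha(\langle x_i\rangle)=\bigcap_{M}\overline{\{x_n:n<-M\}}$. A two-sided $\delta$-pseudo-orbit is $\langle x_i\rangle_{i\in\mathbb Z}$ with $d(f(x_i),x_{i+1})<\delta$ for all $i$. $\gamma$-restricted two-sided cofinal orbital shadowing: for every $\epsilon>0$ there is $\delta>0$ such that for every two-sided $\delta$-pseudo-orbit $\langle x_i\rangle$ with $d_H(\alpha(\langle x_i\rangle),\omega(\langle x_i\rangle))<\epsilon$ there is a full trajectory $\langle z_i\rangle$ such that for every $K\in\mathbb N$ there is $N\ge K$ with $d_H(\overline{\{z_{N+i}\}_{i\ge0}},\overline{\{x_{N+i}\}_{i\ge0}})<\epsilon$ and $d_H(\overline{\{z_{i-N}\}_{i\le0}},\overline{\{x_{i-N}\}_{i\le0}})<\epsilon$. *)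

From Stdlib Require Import Reals ZArith List.
From Coquelicot Require Import Coquelicot.
Open Scope R_scope.

Section MetricDefs.
Context {X : Type} (d : X -> X -> R).

Definition is_metric : Prop :=
  (forall x y, 0 <= d x y) /\
  (forall x y, d x y = 0 <-> x = y) /\
  (forall x y, d x y = d y x) /\
  (forall x y z, d x z <= d x y + d y z).

Definition d_open (U : X -> Prop) : Prop :=
  forall x, U x -> exists e, 0 < e /\ forall y, d x y < e -> U y.

Definition d_compact : Prop :=
  forall (I : Type) (U : I -> X -> Prop),
    (forall i, d_open (U i)) ->
    (forall x, exists i, U i x) ->
    exists l : list I, forall x, exists i, In i l /\ U i x.

Definition d_continuous (f : X -> X) : Prop :=
  forall x eps, 0 < eps ->
    exists delta, 0 < delta /\ forall y, d x y < delta -> d (f x) (f y) < eps.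

Definition d_closure (A : X -> Prop) : X -> Prop :=
  fun x => forall e, 0 < e -> exists y, A y /\ d x y < e.

Definition dist_pt_set (x : X) (B : X -> Prop) : Rbar :=
  Glb_Rbar (fun r => exists b, B b /\ r = d x b).

Definition excess (A B : X -> Prop) : Rbar :=
  Lub_Rbar (fun r => exists a, A a /\ Finite r = dist_pt_set a B).

Definition Rbar_maxi (a b : Rbar) : Rbar :=
  if Rbar_le_dec a b then b else a.

Definition hausdorff (A B : X -> Prop) : Rbar :=
  Rbar_maxi (excess A B) (excess B A).

Definition shadowing (f : X -> X) : Prop :=
  forall eps, 0 < eps -> exists delta, 0 < delta /\
    forall x : nat -> X, (forall i, d (f (x i)) (x (S i)) < delta) ->
      exists z, forall i, d (Nat.iter i f z) (x i) < eps.

Definition omega_seq (x : Z -> X) : X -> Prop :=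
  fun y => forall M : Z, d_closure (fun p => exists n, (n > M)%Z /\ p = x n) y.

Definition alpha_seq (x : Z -> X) : X -> Prop :=
  fun y => forall M : Z, d_closure (fun p => exists n, (n < - M)%Z /\ p = x n) y.

Definition fwd_tail (x : Z -> X) (N : Z) : X -> Prop :=
  d_closure (fun p => exists i, (i >= 0)%Z /\ p = x (N + i)%Z).

Definition bwd_tail (x : Z -> X) (N : Z) : X -> Prop :=
  d_closure (fun p => exists i, (i <= 0)%Z /\ p = x (i - N)%Z).

Definition gamma_two_sided_cofinal_orbital_shadowing (f : X -> X) : Prop :=
  forall eps, 0 < eps -> exists delta, 0 < delta /\
    forall x : Z -> X,
      (forall i, d (f (x i)) (x (i + 1)%Z) < delta) ->
      Rbar_lt (hausdorff (alpha_seq x) (omega_seq x)) (Finite eps) ->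
      exists z : Z -> X, (forall i, f (z i) = z (i + 1)%Z) /\
        forall K : nat, exists N : nat, (K <= N)%nat /\
          Rbar_lt (hausdorff (fwd_tail z (Z.of_nat N)) (fwd_tail x (Z.of_nat N))) (Finite eps) /\
          Rbar_lt (hausdorff (bwd_tail z (Z.of_nat N)) (bwd_tail x (Z.of_nat N))) (Finite eps).

End MetricDefs.

(* Shadowing on a compact space upgrades to two-sided shadowing. Let K_k be the set of
   points whose forward orbit e-tracks the pseudo-orbit from index -k on; it is closed
   and, by shadowing, nonempty, and f^j maps K_(k+j) into K_k. The sets
   C_m = ∩_(k >= m) cl f^(k-m)(K_k) are nonempty, lie in K_m, and every point of C_m
   has an f-preimage in C_(m+1) (both by taking cluster points, i.e. by compactness), so a
   backward chain through the C_m glues with a forward orbit to a full trajectory that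
   stays e-close to the pseudo-orbit at every time. Pointwise closeness bounds the
   Hausdorff distance between corresponding tails. *)
From Stdlib Require Import Reals ZArith List.
From Coquelicot Require Import Coquelicot.
From Stdlib Require Import ClassicalEpsilon Classical Lia Lra.
Open Scope R_scope.

Section TwoSidedShadowing.

Variables (X : Type) (d : X -> X -> R) (f : X -> X).
Hypothesis Hmetric : is_metric d.
Hypothesis Hcompact : d_compact d.
Hypothesis Hcont : d_continuous d f.

Lemma dist_ge0 x y : 0 <= d x y.
Proof. exact (proj1 Hmetric x y). Qed.

Lemma dist_refl x : d x x = 0.
Proof. exact (proj2 (proj1 (proj2 Hmetric) x x) eq_refl). Qed.

Lemma dist_sym x y : d x y = d y x.
Proof. exact (proj1 (proj2 (proj2 Hmetric)) x y). Qed.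

Lemma dist_triangle x y z : d x z <= d x y + d y z.
Proof. exact (proj2 (proj2 (proj2 Hmetric)) x y z). Qed.

Lemma iter_continuous n : d_continuous d (Nat.iter n f).
Proof.
  induction n as [|n IH]; intros x eps Heps.
  - exists eps. split; [exact Heps|]. intros y Hy. exact Hy.
  - destruct (Hcont (Nat.iter n f x) eps Heps) as [d1 [Hd1 H1]].
    destruct (IH x d1 Hd1) as [d2 [Hd2 H2]].
    exists d2. split; [exact Hd2|]. intros y Hy. exact (H1 _ (H2 y Hy)).
Qed.

Definition cluster_point (u : nat -> X) (q : X) : Prop :=
  forall eps, 0 < eps -> forall N, exists n, (N <= n)%nat /\ d q (u n) < eps.

Lemma le_fold_max (g : X -> nat) (l : list X) q :
  In q l -> (g q <= fold_right Nat.max 0%nat (map g l))%nat.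
Proof.
  induction l as [|a l IH]; simpl; [tauto|].
  intros [->|Hq]; [lia|]. specialize (IH Hq). lia.
Qed.

(* Otherwise every point has a ball avoiding a tail of u; a finite subcover then
   misses u at the largest of the finitely many tail indices. *)
Lemma compact_cluster_point (u : nat -> X) : exists q, cluster_point u q.
Proof.
  apply NNPP; intro Hnone.
  assert (Hsep : forall q, exists p : R * nat, 0 < fst p /\
                   forall n, (snd p <= n)%nat -> fst p <= d q (u n)).
  { intro q. apply NNPP; intro Hq. apply Hnone. exists q. intros eps Heps N.
    apply NNPP; intro HN. apply Hq. exists (eps, N). split; [exact Heps|].
    intros n Hn. apply Rnot_lt_le. intro Hlt. apply HN. exists n. split; auto. }
  destruct (choice _ Hsep) as [g Hg].
  destruct (Hcompact X (fun q y => d q y < fst (g q))) as [l Hl].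
  - intros q y Hy. exists (fst (g q) - d q y). split; [lra|].
    intros y' Hy'. pose proof (dist_triangle q y y'). lra.
  - intro y. exists y. rewrite dist_refl. apply (Hg y).
  - set (M := fold_right Nat.max 0%nat (map (fun q => snd (g q)) l)).
    destruct (Hl (u M)) as [q [Hin Hq]].
    pose proof (proj2 (Hg q) M (le_fold_max (fun q => snd (g q)) l q Hin)). lra.
Qed.

Lemma cluster_point_continuous_eq (u : nat -> X) q p :
  cluster_point u q ->
  (forall eta, 0 < eta -> exists N, forall n, (N <= n)%nat -> d (f (u n)) p < eta) ->
  f q = p.
Proof.
  intros Hq Hconv. apply (proj1 (proj2 Hmetric)).
  apply Rle_antisym; [|apply dist_ge0].
  apply Rle_plus_epsilon. intros eps Heps. rewrite Rplus_0_l.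
  destruct (Hcont q (eps/2)) as [del [Hdel Hfq]]; [lra|].
  destruct (Hconv (eps/2)) as [N HN]; [lra|].
  destruct (Hq del Hdel N) as [n [Hn Hqn]].
  pose proof (Hfq _ Hqn). pose proof (HN n Hn).
  pose proof (dist_triangle (f q) (f (u n)) p). lra.
Qed.

Section Tracking.

Variables (x : Z -> X) (e : R).

Definition tracks (k : nat) (p : X) : Prop :=
  forall i : nat, d (Nat.iter i f p) (x (Z.of_nat i - Z.of_nat k)%Z) <= e.

Definition tracking_core (m : nat) : X -> Prop :=
  fun p => forall k, (m <= k)%nat ->
    d_closure d (fun q => exists w, tracks k w /\ q = Nat.iter (k - m) f w) p.

Lemma tracks_iter k j p : tracks (k + j) p -> tracks k (Nat.iter j f p).
Proof.
  intros Hp i. rewrite <- Nat.iter_add.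
  replace (Z.of_nat i - Z.of_nat k)%Z with (Z.of_nat (i + j) - Z.of_nat (k + j))%Z by lia.
  apply Hp.
Qed.

Lemma tracks_closed k p : d_closure d (tracks k) p -> tracks k p.
Proof.
  intros Hp i. apply Rle_plus_epsilon. intros eta Heta.
  destruct (iter_continuous i p eta Heta) as [del [Hdel Hi]].
  destruct (Hp del Hdel) as [w [Hw Hpw]].
  pose proof (Hi w Hpw). pose proof (Hw i).
  pose proof (dist_triangle (Nat.iter i f p) (Nat.iter i f w) (x (Z.of_nat i - Z.of_nat k)%Z)).
  lra.
Qed.

Lemma tracking_core_tracks m p : tracking_core m p -> tracks m p.
Proof.
  intros Hp. apply tracks_closed. intros eta Heta.
  destruct (Hp m (le_n m) eta Heta) as [q [[w [Hw ->]] Hpq]].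
  rewrite Nat.sub_diag in Hpq. exists w; auto.
Qed.

Lemma tracking_core_of_cluster m (w : nat -> X) q :
  (forall n, tracks (m + n) (w n)) ->
  cluster_point (fun n => Nat.iter n f (w n)) q -> tracking_core m q.
Proof.
  intros Hw Hq k Hk eta Heta.
  destruct (Hq eta Heta (k - m)%nat) as [n [Hn Hqn]].
  exists (Nat.iter n f (w n)). split; [|exact Hqn].
  exists (Nat.iter (n - (k - m)) f (w n)). split.
  - apply tracks_iter. replace (k + (n - (k - m)))%nat with (m + n)%nat by lia. apply Hw.
  - rewrite <- Nat.iter_add. f_equal. lia.
Qed.

Lemma tracking_core_nonempty :
  (forall k, exists p, tracks k p) -> exists p, tracking_core 0 p.
Proof.
  intros Htr. destruct (choice tracks Htr) as [w Hw].
  destruct (compact_cluster_point (fun n => Nat.iter n f (w n))) as [q Hq].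
  exists q. exact (tracking_core_of_cluster 0 w q Hw Hq).
Qed.

Lemma tracking_core_preimage m p :
  tracking_core m p -> exists q, tracking_core (S m) q /\ f q = p.
Proof.
  intros Hp.
  assert (Happrox : forall n, exists w, tracks (S m + n) w /\
                      d (Nat.iter (S n) f w) p < / INR (S n)).
  { intro n. destruct (Hp (S m + n)%nat ltac:(lia) (/ INR (S n))) as [q [[w [Hw ->]] Hpq]].
    - apply Rinv_0_lt_compat, lt_0_INR; lia.
    - exists w. split; [exact Hw|]. rewrite dist_sym.
      replace (S m + n - m)%nat with (S n) in Hpq by lia. exact Hpq. }
  destruct (choice _ Happrox) as [w Hw].
  destruct (compact_cluster_point (fun n => Nat.iter n f (w n))) as [q Hq].
  exists q. split.
  - apply (tracking_core_of_cluster (S m) w q); [apply Hw|exact Hq].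
  - apply (cluster_point_continuous_eq _ q p Hq). intros eta Heta.
    destruct (archimed_cor1 eta Heta) as [N [HN HN0]].
    exists N. intros n Hn. apply (Rlt_le_trans _ _ _ (proj2 (Hw n))).
    apply (Rle_trans _ (/ INR N)); [|lra].
    apply Rinv_le_contravar; [apply lt_0_INR; lia|apply le_INR; lia].
Qed.

End Tracking.

Lemma preimage_chain (P : nat -> X -> Prop) p0 :
  P 0%nat p0 -> (forall m p, P m p -> exists q, P (S m) q /\ f q = p) ->
  exists b : nat -> X, forall m, P m (b m) /\ f (b (S m)) = b m.
Proof.
  intros H0 Hstep.
  assert (Hchoice : forall m p, exists q, P m p -> P (S m) q /\ f q = p).
  { intros m p. destruct (classic (P m p)) as [Hp|Hp].
    - destruct (Hstep m p Hp) as [q Hq]. exists q; auto.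
    - exists p; contradiction. }
  destruct (choice (fun mp q => P (fst mp) (snd mp) -> P (S (fst mp)) q /\ f q = snd mp))
    as [g Hg]; [intros [m p]; apply Hchoice|].
  set (b := nat_rect (fun _ => X) p0 (fun m bm => g (m, bm))).
  assert (Hb : forall m, P m (b m)) by (induction m; [exact H0|exact (proj1 (Hg (m, b m) IHm))]).
  exists b. intro m. split; [apply Hb|exact (proj2 (Hg (m, b m) (Hb m)))].
Qed.

Definition two_sided_orbit (b : nat -> X) : Z -> X :=
  fun i => if (0 <=? i)%Z then Nat.iter (Z.to_nat i) f (b 0%nat) else b (Z.to_nat (- i)).

Lemma two_sided_orbit_step (b : nat -> X) :
  (forall m, f (b (S m)) = b m) -> forall i, f (two_sided_orbit b i) = two_sided_orbit b (i + 1).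
Proof.
  intros Hb i. unfold two_sided_orbit. destruct (Z.leb_spec 0 i).
  - rewrite (proj2 (Z.leb_le 0 (i + 1))) by lia.
    replace (Z.to_nat (i + 1)) with (S (Z.to_nat i)) by lia. reflexivity.
  - destruct (Z.eq_dec i (-1)) as [->|Hi]; [apply (Hb 0%nat)|].
    rewrite (proj2 (Z.leb_gt 0 (i + 1))) by lia.
    replace (Z.to_nat (- i)) with (S (Z.to_nat (- (i + 1)))) by lia. apply Hb.
Qed.

Lemma two_sided_orbit_close (x : Z -> X) e (b : nat -> X) :
  (forall m, tracks x e m (b m)) -> forall i, d (two_sided_orbit b i) (x i) <= e.
Proof.
  intros Hb i. unfold two_sided_orbit. destruct (Z.leb_spec 0 i).
  - pose proof (Hb 0%nat (Z.to_nat i)) as Hi.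
    replace (Z.of_nat (Z.to_nat i) - Z.of_nat 0)%Z with i in Hi by lia. exact Hi.
  - pose proof (Hb (Z.to_nat (- i)) 0%nat) as Hi.
    replace (Z.of_nat 0 - Z.of_nat (Z.to_nat (- i)))%Z with i in Hi by lia. exact Hi.
Qed.

Definition two_sided_shadowing : Prop :=
  forall eps, 0 < eps -> exists delta, 0 < delta /\
    forall x : Z -> X, (forall i, d (f (x i)) (x (i + 1)%Z) < delta) ->
      exists z : Z -> X, (forall i, f (z i) = z (i + 1)%Z) /\ forall i, d (z i) (x i) < eps.

Theorem shadowing_two_sided : shadowing d f -> two_sided_shadowing.
Proof.
  intros Hsh eps Heps.
  destruct (Hsh (eps/2)) as [delta [Hdelta Hs]]; [lra|].
  exists delta. split; [exact Hdelta|]. intros x Hx.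
  assert (Htr : forall k, exists p, tracks x (eps/2) k p).
  { intro k. destruct (Hs (fun i => x (Z.of_nat i - Z.of_nat k)%Z)) as [p Hp].
    - intro i. replace (Z.of_nat (S i) - Z.of_nat k)%Z with (Z.of_nat i - Z.of_nat k + 1)%Z
        by lia. apply Hx.
    - exists p. intro i. apply Rlt_le, Hp. }
  destruct (tracking_core_nonempty x (eps/2) Htr) as [p0 Hp0].
  destruct (preimage_chain _ p0 Hp0 (tracking_core_preimage x (eps/2))) as [b Hb].
  exists (two_sided_orbit b). split.
  - apply two_sided_orbit_step. intro m. apply Hb.
  - intro i. eapply Rle_lt_trans; [|apply (Rlt_eps2_eps eps Heps)].
    apply two_sided_orbit_close. intro m. apply tracking_core_tracks, Hb.
Qed.

Lemma excess_closure_le (A B : X -> Prop) e :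
  (forall a, A a -> exists b, B b /\ d a b <= e) ->
  Rbar_le (excess d (d_closure d A) (d_closure d B)) (Finite e).
Proof.
  intros HAB. unfold excess.
  apply (proj2 (Lub_Rbar_correct _)). intros r [a [Ha Hr]].
  destruct (Glb_Rbar_correct (fun s => exists b, d_closure d B b /\ s = d a b)) as [Hlb _].
  unfold dist_pt_set in Hr. rewrite <- Hr in Hlb. simpl.
  apply Rle_plus_epsilon. intros eta Heta.
  destruct (Ha eta Heta) as [a' [Ha' Haa']].
  destruct (HAB a' Ha') as [b [Hb Ha'b]].
  assert (Hbcl : d_closure d B b).
  { intros eps Heps. exists b. rewrite dist_refl. auto. }
  pose proof (Hlb (d a b) (ex_intro _ b (conj Hbcl eq_refl))).
  pose proof (dist_triangle a a' b). simpl in *. lra.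
Qed.

Lemma hausdorff_closure_le (I : Type) (Q : I -> Prop) (u v : I -> X) e :
  (forall i, Q i -> d (u i) (v i) <= e) ->
  Rbar_le (hausdorff d (d_closure d (fun p => exists i, Q i /\ p = u i))
                       (d_closure d (fun p => exists i, Q i /\ p = v i))) (Finite e).
Proof.
  intros Huv.
  assert (Hexc : forall a b : I -> X, (forall i, Q i -> d (a i) (b i) <= e) ->
    Rbar_le (excess d (d_closure d (fun p => exists i, Q i /\ p = a i))
                      (d_closure d (fun p => exists i, Q i /\ p = b i))) (Finite e)).
  { intros a b Hab. apply excess_closure_le. intros p [i [Hi ->]].
    exists (b i). split; [exists i; split; auto|exact (Hab i Hi)]. }
  unfold hausdorff, Rbar_maxi. destruct Rbar_le_dec.
  - apply Hexc. intros i Hi. rewrite dist_sym. auto.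
  - exact (Hexc u v Huv).
Qed.

End TwoSidedShadowing.

Theorem mainTheorem6 (X : Type) (d : X -> X -> R) (f : X -> X)
  (Hmetric : is_metric d) (Hcompact : d_compact d) (Hcont : d_continuous d f) :
  shadowing d f -> gamma_two_sided_cofinal_orbital_shadowing d f.
Proof.
  intros Hsh eps Heps.
  destruct (shadowing_two_sided X d f Hmetric Hcompact Hcont Hsh (eps/2)) as [delta [Hdelta H]];
    [lra|].
  exists delta. split; [exact Hdelta|]. intros x Hx _.
  destruct (H x Hx) as [z [Hz Hzx]].
  assert (Hclose : forall i, d (z i) (x i) <= eps/2) by (intro i; apply Rlt_le, Hzx).
  exists z. split; [exact Hz|]. intro K. exists K. split; [lia|].
  assert (Hhalf : Rbar_lt (Finite (eps/2)) (Finite eps)) by (simpl; lra).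
  split; apply (fun Hle => Rbar_le_lt_trans _ _ _ Hle Hhalf).
  - apply (hausdorff_closure_le X d Hmetric _ _ (fun i => z (Z.of_nat K + i)%Z)
             (fun i => x (Z.of_nat K + i)%Z)); auto.
  - apply (hausdorff_closure_le X d Hmetric _ _ (fun i => z (i - Z.of_nat K)%Z)
             (fun i => x (i - Z.of_nat K)%Z)); auto.
Qed.
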